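(* Let $(\mathcal{X},\rho)$ be a length space and $\eta:\mathcal{X}\to\mathcal{Y}$ a function. Then for all $r>0$, $V_r^c=(\partial_\eta\mathcal{X})^r$, where $V_r=\{x\in\mathcal{X}:\mathrm{margin}_\eta(x)\ge r\}$.
   Context: A length space: $\rho(x,x')=\inf_\gamma\ell(\gamma)$ over continuous paths from $x$ to $x'$. $\mathrm{margin}_\eta(x)=\inf\{\rho(x,x'):\eta(x')\ne\eta(x)\}$, $\partial_\eta\mathcal{X}=\{x:\mathrm{margin}_\eta(x)=0\}$, and for $A\subset\mathcal{X}$, $A^r=\bigcup_{x\in A}B(x,r)$ with $B(x,r)$ the open ball. *)

From mathcomp Require Import all_boot all_order all_algebra.
From mathcomp Require Import all_classical all_reals ereal.
Set Implicit Arguments. Unset Strict Implicit. Unset Printing Implicit Defensive.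
Import Order.TTheory GRing.Theory Num.Theory.
Local Open Scope classical_set_scope.
Local Open Scope ring_scope.

Definition is_metric (R : realType) (X : Type) (rho : X -> X -> R) : Prop :=
  [/\ forall x, rho x x = 0,
      forall x y, rho x y = 0 -> x = y,
      forall x y, rho x y = rho y x &
      forall x y z, rho x z <= rho x y + rho y z].

Definition path_continuous (R : realType) (X : Type) (rho : X -> X -> R)
    (gamma : R -> X) : Prop :=
  forall t, 0 <= t <= 1 -> forall e, 0 < e -> exists2 d, 0 < d &
    forall s, 0 <= s <= 1 -> `|s - t| < d -> rho (gamma s) (gamma t) < e.

Definition partition01 (R : realType) (n : nat) (t : nat -> R) : Prop :=
  [/\ t 0%N = 0, t n = 1 & forall i, (i < n)%N -> t i <= t i.+1].

Definition path_length (R : realType) (X : Type) (rho : X -> X -> R)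
    (gamma : R -> X) : \bar R :=
  ereal_sup [set l : \bar R | exists n t, partition01 n t /\
     l = ((\sum_(i < n) rho (gamma (t i)) (gamma (t i.+1)))%:E)%E].

Definition length_space (R : realType) (X : Type) (rho : X -> X -> R) : Prop :=
  is_metric rho /\
  forall x x', ((rho x x')%:E)%E = ereal_inf [set l : \bar R | exists gamma : R -> X,
      [/\ path_continuous rho gamma, gamma 0 = x, gamma 1 = x' &
          l = path_length rho gamma]].

(* margin_eta(x) = inf { rho(x,x') : eta x' <> eta x } (= +oo if eta constant) *)
Definition margin (R : realType) (X Y : Type) (rho : X -> X -> R) (eta : X -> Y)
    (x : X) : \bar R :=
  ereal_inf [set l : \bar R | exists2 x', eta x' <> eta x & l = ((rho x x')%:E)%E].

Definition boundary (R : realType) (X Y : Type) (rho : X -> X -> R) (eta : X -> Y)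
    : set X := [set x | margin rho eta x = 0%E].

Definition oball (R : realType) (X : Type) (rho : X -> X -> R) (x : X) (r : R)
    : set X := [set x' | rho x x' < r].

Definition enlarge (R : realType) (X : Type) (rho : X -> X -> R) (A : set X) (r : R)
    : set X := \bigcup_(x in A) oball rho x r.

Definition Vr (R : realType) (X Y : Type) (rho : X -> X -> R) (eta : X -> Y) (r : R)
    : set X := [set x | (r%:E <= margin rho eta x)%E].

From mathcomp Require Import all_boot all_order all_algebra.
From mathcomp Require Import all_classical all_reals ereal.
From mathcomp Require Import lra.
Set Implicit Arguments. Unset Strict Implicit. Unset Printing Implicit Defensive.
Import Order.TTheory GRing.Theory Num.Theory.
Local Open Scope classical_set_scope.
Local Open Scope ring_scope.

(* The margin is 1-Lipschitz, so every point within distance r of a point of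
   margin 0 has margin < r.  Conversely, if x has margin < r, there is a point
   x' with another label and a path from x to x' of length < r; the first time
   t at which the label along the path changes is a boundary point, since the
   label changes arbitrarily close to t, and its distance to x is bounded by
   the length of the path. *)

Section Margin.
Variables (R : realType) (X Y : Type) (rho : X -> X -> R) (eta : X -> Y).
Hypothesis rho_metric : is_metric rho.

Lemma metric_ge0 x y : 0 <= rho x y.
Proof.
have [rho0 _ rhoC rho_tri] := rho_metric.
by have := rho_tri x y x; rewrite rho0 (rhoC y x); lra.
Qed.

Lemma margin_le x x' : eta x' <> eta x -> (margin rho eta x <= (rho x x')%:E)%E.
Proof. by move=> etax'; apply: ereal_inf_lbound; exists x'. Qed.

Lemma margin_lt x a : (margin rho eta x < a%:E)%E ->
  exists2 x', eta x' <> eta x & rho x x' < a.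
Proof. by case/ereal_inf_lt => _ [x' etax' ->]; rewrite lte_fin; exists x'. Qed.

Lemma margin_ge0 x : (0 <= margin rho eta x)%E.
Proof. by apply: le_ereal_inf_tmp => _ [x' _ ->]; rewrite lee_fin metric_ge0. Qed.

Lemma boundary_approx b :
  (forall e, 0 < e -> exists2 x', eta x' <> eta b & rho b x' < e) ->
  boundary rho eta b.
Proof.
move=> happrox; apply/eqP; rewrite eq_le margin_ge0 andbT.
apply/lee_addgt0Pr => e /happrox[x' etax' ltx'e]; rewrite add0e.
by apply: le_trans (margin_le etax') _; rewrite lee_fin ltW.
Qed.

Lemma margin_lipschitz x b :
  (margin rho eta x <= (rho x b)%:E + margin rho eta b)%E.
Proof.
have [_ _ _ rho_tri] := rho_metric.
have [etaxb|etaxb] := pselect (eta x = eta b).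
- rewrite -leeBlDl //; apply: le_ereal_inf_tmp => _ [x' etax' ->].
  have etaxx' : eta x' <> eta x by rewrite etaxb.
  rewrite leeBlDl // -EFinD (le_trans (margin_le etaxx')) // lee_fin.
  exact: rho_tri.
- have etabx : eta b <> eta x by move=> etabx; apply: etaxb.
  by rewrite (le_trans (margin_le etabx)) // leeDl ?margin_ge0.
Qed.

Lemma enlarge_boundary_sub r :
  enlarge rho (boundary rho eta) r `<=` ~` Vr rho eta r.
Proof.
have [_ _ rhoC _] := rho_metric.
move=> x [b margin_b0 ltbxr]; apply/negP; rewrite -ltNge.
by apply: le_lt_trans (margin_lipschitz x b) _; rewrite margin_b0 adde0 lte_fin rhoC.
Qed.

Section Path.
Variable g : R -> X.
Hypothesis g_cont : path_continuous rho g.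

Lemma path_boundary_approx t : 0 <= t <= 1 ->
  (forall d, 0 < d -> exists2 s, 0 <= s <= 1 & `|s - t| < d /\ eta (g s) <> eta (g t)) ->
  boundary rho eta (g t).
Proof.
have [_ _ rhoC _] := rho_metric.
move=> t01 happrox; apply: boundary_approx => e /(g_cont t01)[d d_gt0 near_t].
have [s s01 [ltstd etas]] := happrox d d_gt0.
by exists (g s) => //; rewrite rhoC near_t.
Qed.

Lemma path_meets_boundary : eta (g 1) <> eta (g 0) ->
  exists2 t, 0 <= t <= 1 & boundary rho eta (g t).
Proof.
move=> eta10.
pose A := [set t : R | 0 <= t <= 1 /\ eta (g t) <> eta (g 0)].
have A1 : A 1 by split; rewrite ?ler01 ?lexx.
have A_lb : has_lbound A by exists 0 => t [/andP[]].
pose t0 := inf A.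
have t0_le : forall t, A t -> t0 <= t by move=> t; apply: ge_inf.
have t0_ge0 : 0 <= t0 by apply: lb_le_inf; [exists 1 | move=> t [/andP[]]].
have t0_01 : 0 <= t0 <= 1 by rewrite t0_ge0 t0_le.
exists t0 => //; apply: path_boundary_approx => // d d_gt0.
(* If [g t0] keeps the initial label, points of [A] approach [t0] from the
   right; otherwise [0 < t0] and the points just left of [t0] keep it. *)
have [etat0|etat0] := pselect (eta (g t0) = eta (g 0)).
- have [s [s01 etas] ltsd] := inf_adherent d_gt0 (conj (ex_intro _ 1 A1) A_lb).
  have := t0_le s (conj s01 etas); rewrite -/t0 => let0s.
  by exists s => //; split; [rewrite ger0_norm; lra | rewrite etat0].
- have t0_gt0 : 0 < t0.
    by rewrite lt_neqAle t0_ge0 andbT; apply/eqP => t00; rewrite -t00 in etat0.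
  pose s := Num.max 0 (t0 - d / 2).
  have s_ge0 : 0 <= s by rewrite le_max lexx.
  have lts_t0 : s < t0 by rewrite gt_max t0_gt0 /=; lra.
  have ltt0_s : t0 - d < s by rewrite lt_max; apply/orP; right; lra.
  have s01 : 0 <= s <= 1 by rewrite s_ge0 /=; lra.
  exists s => //; split; first by rewrite ltr0_norm; lra.
  move=> etast0; suff : t0 <= s by lra.
  by apply: t0_le; split; rewrite // etast0.
Qed.

Lemma path_length_ge_dist t : 0 <= t <= 1 ->
  ((rho (g 0) (g t))%:E <= path_length rho g)%E.
Proof.
move=> /andP[t_ge0 t_le1].
pose p i : R := if i == 0%N then 0 else if i == 1%N then t else 1.
have p_part : partition01 2 p by split => //; case=> [|[|]] //= _; rewrite /p /=.
apply: (@le_trans _ _ (\sum_(i < 2) rho (g (p i)) (g (p i.+1)))%:E).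
  by rewrite !big_ord_recr big_ord0 /= add0r lee_fin /p /= lerDl metric_ge0.
by apply: ereal_sup_ubound; exists 2%N, p.
Qed.

End Path.
End Margin.

Lemma compl_Vr_sub (R : realType) (X Y : Type) (rho : X -> X -> R) (eta : X -> Y) r :
  length_space rho -> ~` Vr rho eta r `<=` enlarge rho (boundary rho eta) r.
Proof.
case=> rho_metric rho_inf x; rewrite /Vr /= => /negP; rewrite -ltNge.
move=> margin_lt_r; have [x' etax' ltxx'r] := margin_lt margin_lt_r.
have : ((rho x x')%:E < r%:E)%E by rewrite lte_fin.
rewrite rho_inf => /ereal_inf_lt[_ [g [g_cont gx gx' ->]] short_g].
subst x x'.
have [t t01 bd_gt] := path_meets_boundary rho_metric g_cont etax'.
have [_ _ rhoC _] := rho_metric.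
exists (g t) => //; rewrite /oball /= rhoC -lte_fin.
by apply: le_lt_trans short_g; exact: path_length_ge_dist.
Qed.

Theorem lemma13 (R : realType) (X Y : Type) (rho : X -> X -> R)
  (hlen : length_space rho) (eta : X -> Y) (r : R) :
  0 < r -> ~` Vr rho eta r = enlarge rho (boundary rho eta) r.
Proof.
move=> _; apply/seteqP; split; first exact: compl_Vr_sub.
by apply: enlarge_boundary_sub; case: hlen.
Qed.
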